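(* Let $F=F(N,\mathcal D)$ be a connected GSC. Suppose there is $m\ge1$ and a partition $\mathcal D^m=I\cup J$ with $I\cap J=\varnothing$ such that $\big(\bigcup_{\mathbf i\in I}\varphi_{\mathbf i}(F)\big)\cap\big(\bigcup_{\mathbf i\in J}\varphi_{\mathbf i}(F)\big)=\{x\}$ for some $x\in F$. Then $F$ is fragile.
   Context: GSC: $N\ge2$, $\mathcal D\subset\{0,\dots,N-1\}^2$ with $1<|\mathcal D|<N^2$, $\varphi_i(x)=\frac1N(x+i)$, $F$ the attractor $F=\bigcup_{i\in\mathcal D}\varphi_i(F)$; $\varphi_{i_1\cdots i_m}=\varphi_{i_1}\circ\cdots\circ\varphi_{i_m}$. $F$ is fragile if there is a partition $\mathcal D=\mathcal D_1\cup\mathcal D_2$ into disjoint nonempty sets with $\big(\bigcup_{i\in\mathcal D_1}\varphi_i(F)\big)\cap\big(\bigcup_{i\in\mathcal D_2}\varphi_i(F)\big)$ a singleton. *)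

From HB Require Import structures.
From mathcomp Require Import all_boot all_order all_algebra.
From mathcomp Require Import all_classical all_reals all_analysis.
Unset Printing Implicit Defensive.
Import Order.TTheory GRing.Theory Num.Theory.
Import numFieldNormedType.Exports.
Local Open Scope classical_set_scope.
Local Open Scope ring_scope.

Definition digit (N : nat) := ('I_N * 'I_N)%type.

Definition phi {R : realType} (N : nat) (i : digit N) (x : R * R) : R * R :=
  ((x.1 + (i.1 : nat)%:R) / N%:R, (x.2 + (i.2 : nat)%:R) / N%:R).

Definition phiw {R : realType} (N : nat) (w : seq (digit N)) : R * R -> R * R :=
  foldr (fun i g => phi N i \o g) id w.

Definition is_attractor {R : realType} (N : nat) (D : {set digit N})
    (F : set (R * R)) : Prop :=
  [/\ compact F, F !=set0 &
      F = \bigcup_(i in [set i | i \in D]) (phi N i @` F)].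

Definition words (N : nat) (D : {set digit N}) (m : nat) : set (seq (digit N)) :=
  [set w | size w = m /\ all (fun i => i \in D) w].

Definition cell_union {R : realType} (N : nat) (A : set (seq (digit N)))
    (F : set (R * R)) : set (R * R) :=
  \bigcup_(w in A) (phiw N w @` F).

Definition fragile {R : realType} (N : nat) (D : {set digit N})
    (F : set (R * R)) : Prop :=
  exists D1 D2 : {set digit N},
    [/\ D1 :|: D2 = D, D1 :&: D2 = finset.set0, D1 != finset.set0, D2 != finset.set0 &
        exists x : R * R,
          (\bigcup_(i in [set i | i \in D1]) (phi N i @` F)) `&`
          (\bigcup_(i in [set i | i \in D2]) (phi N i @` F)) = [set x]].

From HB Require Import structures.
From mathcomp Require Import all_boot all_order all_algebra.
From mathcomp Require Import all_classical all_reals all_analysis.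
Import Order.TTheory GRing.Theory Num.Theory.
Import numFieldNormedType.Exports.
Local Open Scope classical_set_scope.

(* Induct on m. For a letter i, split the words of I and J starting with i
   into their tails I_i and J_i. If no letter i has both I_i and J_i
   nonempty, the letters leading into I and those leading into J partition
   D, and since phi_i(F) is the union of the cells phi_{iu}(F), the two
   unions over these letters are exactly the two given unions, which meet
   in {x}. Otherwise pick such an i: the unions of the cells indexed by
   I_i and J_i are closed, nonempty and cover the connected set F, so they
   meet; the injective map phi_i sends their intersection into {x}, so it
   is a singleton, and the induction hypothesis applies at level m - 1. *)

Lemma connected_closed_cover_meet (T : topologicalType) (S A B : set T) :
  connected S -> closed A -> closed B -> S = A `|` B ->
  A !=set0 -> B !=set0 -> A `&` B !=set0.
Proof.
move=> cS cA cB SAB A0 B0; apply/set0P/eqP => AB0.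
apply: (connectedPn S).2 cS; exists (fun b => if b then B else A).
split => //; first by case.
by rewrite /separated -(closure_id A).1 // -(closure_id B).1.
Qed.

Lemma inj_image_sub_set1 (aT rT : Type) (f : aT -> rT) (S : set aT) x y :
  injective f -> S y -> f @` S `<=` [set x] -> S = [set y].
Proof.
move=> finj Sy fSx; apply/seteqP; split=> [t St|_ ->] //.
have fx z : S z -> f z = x by move=> Sz; apply: fSx; exists z.
by apply: finj; rewrite (fx t St) (fx y Sy).
Qed.

Lemma bigcup_restrict (T I : Type) (P Q : set I) (G H : I -> set T) :
  Q `<=` P -> (forall i, Q i -> G i = H i) ->
  (forall i, P i -> ~ Q i -> G i = set0) ->
  \bigcup_(i in P) G i = \bigcup_(i in Q) H i.
Proof.
move=> QP GH G0; apply/seteqP; split=> [y [i Pi Gy]|y [i Qi Hy]].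
  have [Qi|nQi] := pselect (Q i); first by exists i; rewrite // -GH.
  by move: Gy; rewrite G0.
by exists i; [exact: QP | rewrite GH].
Qed.

Definition residual {T : Type} (A : set (seq T)) (i : T) : set (seq T) :=
  [set w | A (i :: w)].

Lemma residualU (T : Type) (A B : set (seq T)) i :
  residual (A `|` B) i = residual A i `|` residual B i.
Proof. by []. Qed.

Lemma residualI (T : Type) (A B : set (seq T)) i :
  residual (A `&` B) i = residual A i `&` residual B i.
Proof. by []. Qed.

Section Words.
Context {N : nat} {D : {set digit N}}.

Lemma words_finite k : finite_set (words N D k).
Proof.
apply: (@sub_finite_set _ _ (val @` [set: k.-tuple (digit N)])).
  by move=> w [/eqP sw _]; exists (Tuple sw).
exact/finite_image/finite_finset.
Qed.

Lemma words0 : words N D 0 = [set [::]].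
Proof. by apply/seteqP; split=> [w [sw _]|_ ->]; [case: w sw | split]. Qed.

Lemma residual_words_sub {A k i} :
  A `<=` words N D k.+1 -> residual A i `<=` words N D k.
Proof. by move=> AW u /AW [[su] /andP[_ au]]. Qed.

Lemma residual_wordsS k i : i \in D -> residual (words N D k.+1) i = words N D k.
Proof.
move=> iD; apply/seteqP; split; first exact: residual_words_sub.
by move=> u [su au]; split; rewrite /= ?su ?iD.
Qed.

Lemma residual_partition {I J k i} : I `|` J = words N D k.+1 -> i \in D ->
  residual I i `|` residual J i = words N D k.
Proof. by move=> IJ iD; rewrite -residualU IJ residual_wordsS. Qed.

Lemma residual_complement {A B k i} : A `|` B = words N D k.+1 -> i \in D ->
  residual B i = set0 -> residual A i = words N D k.
Proof. by move=> AB iD B0; rewrite -(residual_partition AB iD) B0 setU0. Qed.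

End Words.

Section Cells.
Variables (R : realType) (N : nat) (D : {set digit N}) (F : set (R * R)).
Local Open Scope ring_scope.

Lemma phi_continuous i : continuous (@phi R N i).
Proof.
move=> z; rewrite /phi.
have coord (p : R * R -> R) (a : R) : p @ z --> p z ->
    (fun y => (p y + a) / N%:R) @ z --> (p z + a) / N%:R.
  by move=> pz; apply: cvgM; [apply: cvgD => //; exact: cvg_cst | exact: cvg_cst].
exact: cvg_pair (coord _ _ cvg_fst) (coord _ _ cvg_snd).
Qed.

Lemma phiw_continuous w : continuous (@phiw R N w).
Proof.
elim: w => [|i w IH] z /=; first exact: cvg_id.
by apply: continuous_comp; [exact: IH | exact: phi_continuous].
Qed.

Lemma phi_inj i : (0 < N)%N -> injective (@phi R N i).
Proof.
move=> N0 [a1 a2] [b1 b2] [e1 e2].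
have N'0 : (N%:R : R)^-1 != 0 by rewrite invr_eq0 pnatr_eq0 -lt0n.
by move: e1 e2 => /(mulIf N'0)/addIr -> /(mulIf N'0)/addIr ->.
Qed.

Lemma cell_union_closed A k :
  compact F -> A `<=` words N D k -> closed (cell_union N A F).
Proof.
move=> cF AW; apply: closed_bigcup => [|w _].
  exact: sub_finite_set AW (words_finite k).
apply: compact_closed; first exact: norm_hausdorff.
by apply: continuous_compact => //; apply/continuous_subspaceT/phiw_continuous.
Qed.

Lemma cell_unionU A B :
  cell_union N (A `|` B) F = cell_union N A F `|` cell_union N B F.
Proof. exact: bigcup_setU. Qed.

Lemma cell_union_set0 : cell_union N set0 F = set0.
Proof. exact: bigcup_set0. Qed.

Lemma cell_union_residual_phi A i t :
  cell_union N (residual A i) F t -> cell_union N A F (phi N i t).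
Proof. by move=> [u Au [z Fz <-]]; exists (i :: u) => //; exists z. Qed.

Lemma cell_union_residual {A k} : A `<=` words N D k.+1 ->
  cell_union N A F =
  \bigcup_(i in [set i | i \in D]) (phi N i @` cell_union N (residual A i) F).
Proof.
move=> AW; apply/seteqP; split=> [_ [w Aw [z Fz <-]]|_ [i _ [t At <-]]].
  case: w Aw (AW _ Aw) => [|i u] Aw [//= _ /andP[iD _]].
  by exists i => //; exists (phiw N u z) => //; exists u => //; exists z.
exact: cell_union_residual_phi.
Qed.

Hypothesis attrF : is_attractor N D F.

Lemma cell_union_words k : cell_union N (words N D k) F = F.
Proof.
elim: k => [|k IH]; first by rewrite /cell_union words0 bigcup_set1 /= image_id.
have [_ _ FE] := attrF.
rewrite [RHS]FE (@cell_union_residual _ k (@subset_refl _ (words N D k.+1))).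
by apply: eq_bigcupr => i iD; rewrite residual_wordsS // IH.
Qed.

Lemma cell_union_of_residuals {A k} {D' : {set digit N}} :
  A `<=` words N D k.+1 -> D' \subset D ->
  (forall i, i \in D -> residual A i = if i \in D' then words N D k else set0) ->
  cell_union N A F = \bigcup_(i in [set i | i \in D']) (phi N i @` F).
Proof.
move=> AW D'D resA; rewrite (cell_union_residual AW).
apply: bigcup_restrict => [i /(fintype.subsetP D'D)//|i iD'|i iD /negP iD'].
  by rewrite resA ?iD' ?cell_union_words //; apply: (fintype.subsetP D'D).
by rewrite resA // (negbTE iD') cell_union_set0 image_set0.
Qed.

Section Partition.
Context {k : nat} {I J : set (seq (digit N))} {x : R * R}.
Hypotheses (IJ : I `|` J = words N D k.+1)
  (IJx : cell_union N I F `&` cell_union N J F = [set x]).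

Let IW : I `<=` words N D k.+1. Proof. by rewrite -IJ => w; left. Qed.
Let JW : J `<=` words N D k.+1. Proof. by rewrite -IJ => w; right. Qed.

Lemma fragile_of_unsplit :
  ~ (exists i, [/\ i \in D, residual I i !=set0 & residual J i !=set0]) ->
  fragile N D F.
Proof.
move=> unsplit.
have I0 i : i \in D -> residual J i != set0 -> residual I i = set0.
  by move=> iD /set0P J0; apply/nonemptyPn => I0; apply: unsplit; exists i.
pose D1 := [set i in D | residual J i == set0].
pose D2 := [set i in D | residual J i != set0].
have E1 : cell_union N I F = \bigcup_(i in [set i | i \in D1]) (phi N i @` F).
  apply: cell_union_of_residuals IW _ _ => [|i iD].
    by apply/fintype.subsetP => a; rewrite inE => /andP[].
  rewrite inE iD /=; have [/eqP J0|J0] := boolP (_ == _); last exact: I0.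
  exact: residual_complement IJ iD J0.
have E2 : cell_union N J F = \bigcup_(i in [set i | i \in D2]) (phi N i @` F).
  apply: cell_union_of_residuals JW _ _ => [|i iD].
    by apply/fintype.subsetP => a; rewrite inE => /andP[].
  rewrite inE iD /=; have [J0|/negPn/eqP//] := boolP (_ != _).
  by apply: residual_complement iD (I0 i iD J0); rewrite setUC.
have : (cell_union N I F `&` cell_union N J F) x by rewrite IJx.
rewrite {1}E1 E2 => -[[i iD1 _] [j jD2 _]].
exists D1, D2; split.
- by apply/setP => a; rewrite !inE; case: (a \in D); rewrite //= orbN.
- by apply/setP => a; rewrite !inE; case: (a \in D); rewrite //= andbN.
- by apply/set0Pn; exists i.
- by apply/set0Pn; exists j.
- by exists x; rewrite -E1 -E2.
Qed.

Lemma residual_meet_singleton i : (0 < N)%N -> connected F -> i \in D ->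
  residual I i !=set0 -> residual J i !=set0 ->
  exists y, cell_union N (residual I i) F `&` cell_union N (residual J i) F
            = [set y].
Proof.
move=> N0 cF iD [u Iu] [v Jv].
have [cptF [z Fz] _] := attrF.
have cover : F = cell_union N (residual I i) F `|` cell_union N (residual J i) F.
  by rewrite -cell_unionU (residual_partition IJ iD) cell_union_words.
have [y IJy] : cell_union N (residual I i) F `&` cell_union N (residual J i) F !=set0.
  apply: connected_closed_cover_meet cF _ _ cover _ _.
  - exact: cell_union_closed cptF (residual_words_sub IW).
  - exact: cell_union_closed cptF (residual_words_sub JW).
  - by exists (phiw N u z); exists u => //; exists z.
  - by exists (phiw N v z); exists v => //; exists z.
exists y; apply: (@inj_image_sub_set1 _ _ _ _ x) (phi_inj i N0) IJy _.
by rewrite -IJx => _ [t [It Jt] <-]; split; apply: cell_union_residual_phi.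
Qed.

End Partition.

Lemma fragile_of_cell_partition k I J x : (0 < N)%N -> connected F ->
  I `|` J = words N D k.+1 -> I `&` J = set0 ->
  cell_union N I F `&` cell_union N J F = [set x] -> fragile N D F.
Proof.
move=> N0 cF; elim: k I J x => [|k IH] I J x IJ IJ0 IJx;
  (have [[i [iD Ine Jne]]|] :=
     pselect (exists i, [/\ i \in D, residual I i !=set0 & residual J i !=set0]);
   last exact: fragile_of_unsplit IJ IJx).
- have [[u Iu] [v Jv]] := (Ine, Jne).
  have /residual_words_sub/(_ _ Iu) : I `<=` words N D 1 by rewrite -IJ => w; left.
  have /residual_words_sub/(_ _ Jv) : J `<=` words N D 1 by rewrite -IJ => w; right.
  rewrite words0 => /= v0 u0; move: Iu Jv; rewrite u0 v0 => Ii Ji.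
  have : (I `&` J) [:: i] by split.
  by rewrite IJ0.
- have [y IJy] := residual_meet_singleton IJ IJx i N0 cF iD Ine Jne.
  apply: IH IJy; first exact: residual_partition IJ iD.
  by rewrite -residualI IJ0.
Qed.

End Cells.

Theorem mainTheorem9 (R : realType) (N : nat) (D : {set digit N})
  (F : set (R * R)) :
  (2 <= N)%N -> (1 < #|D|)%N -> (#|D| < N ^ 2)%N ->
  is_attractor N D F -> connected F ->
  forall (m : nat), (1 <= m)%N ->
  forall (I J : set (seq (digit N))),
    I `|` J = words N D m -> I `&` J = set0 ->
  forall x : R * R, F x ->
    cell_union N I F `&` cell_union N J F = [set x] ->
  fragile N D F.
Proof.
move=> N2 _ _ attrF cF [|k] // _ I J IJ IJ0 x _ IJx.
exact: fragile_of_cell_partition attrF k I J x (ltnW N2) cF IJ IJ0 IJx.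
Qed.
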